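(* Every left-invariant parak\''ahler structure on a nilpotent Lie group is Ricci-flat.
   Context: A parak\''ahler structure on a $2n$-manifold consists of a splitting $TM=V\oplus H$ into rank-$n$ distributions and a pseudoriemannian metric $g$ with $g(KX,KY)=-g(X,Y)$ for $K=\mathrm{id}_V-\mathrm{id}_H$, such that the two-form $F(X,Y)=g(KX,Y)$ is parallel for the Levi-Civita connection of $g$. Left-invariant means $V$, $H$ and $g$ are invariant under left translations. *)

(* Left-invariant geometry on a (simply) connected Lie group
   is encoded by the corresponding data on its Lie algebra R^N. *)
From HB Require Import structures.
From mathcomp Require Import all_boot all_order all_algebra.
From mathcomp Require Import reals.
Set Implicit Arguments. Unset Strict Implicit. Unset Printing Implicit Defensive.
Import Order.TTheory GRing.Theory Num.Theory.
Local Open Scope ring_scope.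

Section LieAlgebraGeometry.
Variables (R : realType) (N : nat).
Local Notation vec := 'rV[R]_N.

Definition lie_br (c : 'I_N -> 'I_N -> vec) (x y : vec) : vec :=
  \sum_(i < N) \sum_(j < N) (x 0 i * y 0 j) *: c i j.

Definition is_lie_algebra (c : 'I_N -> 'I_N -> vec) : Prop :=
  (forall x, lie_br c x x = 0) /\
  (forall x y z, lie_br c x (lie_br c y z) + lie_br c y (lie_br c z x)
                 + lie_br c z (lie_br c x y) = 0).

(* Nilpotent: some k with ad_{x_1} ... ad_{x_k} y = 0 for all x_i, y
   (equivalently the lower central series g^{k+1} vanishes). *)
Definition nilpotent_lie (c : 'I_N -> 'I_N -> vec) : Prop :=
  exists k : nat, forall (xs : seq vec) (y : vec),
    size xs = k -> foldr (lie_br c) y xs = 0.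

Definition bil (G : 'M[R]_N) (x y : vec) : R := (x *m G *m y^T) 0 0.

Definition basis_vec (j : 'I_N) : vec := delta_mx 0 j.

(* Koszul formula for left-invariant fields:
   2 g(nabla_X Y, Z) = g([X,Y],Z) - g([Y,Z],X) + g([Z,X],Y). *)
Definition koszul (c : 'I_N -> 'I_N -> vec) (G : 'M[R]_N) (X Y : vec) : vec :=
  \row_j (bil G (lie_br c X Y) (basis_vec j)
          - bil G (lie_br c Y (basis_vec j)) X
          + bil G (lie_br c (basis_vec j) X) Y).

Definition lc_conn (c : 'I_N -> 'I_N -> vec) (G : 'M[R]_N) (X Y : vec) : vec :=
  2^-1 *: (koszul c G X Y *m invmx G).

Definition curv (c : 'I_N -> 'I_N -> vec) (G : 'M[R]_N) (X Y Z : vec) : vec :=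
  lc_conn c G X (lc_conn c G Y Z) - lc_conn c G Y (lc_conn c G X Z)
  - lc_conn c G (lie_br c X Y) Z.

Definition ricci (c : 'I_N -> 'I_N -> vec) (G : 'M[R]_N) (Y Z : vec) : R :=
  \sum_(i < N) (curv c G (basis_vec i) Y Z) 0 i.

(* Left-invariant parakaehler structure of half-dimension n:
   splitting g = V (+) H into rank-n subspaces, K = id_V - id_H,
   pseudo-Riemannian metric G with g(KX,KY) = -g(X,Y), and
   F(X,Y) = g(KX,Y) parallel for the Levi-Civita connection. *)
Definition parakahler (n : nat) (c : 'I_N -> 'I_N -> vec)
    (G V H K : 'M[R]_N) : Prop :=
  [/\ G^T = G /\ G \in unitmx,
      [/\ \rank V = n, \rank H = n, (V :&: H == (0 : 'M[R]_N))%MS & (1%:M <= V + H)%MS],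
      (forall v : vec, (v <= V)%MS -> v *m K = v) /\
      (forall h : vec, (h <= H)%MS -> h *m K = - h),
      (forall x y : vec, bil G (x *m K) (y *m K) = - bil G x y) &
      (forall X Y Z : vec,
         bil G (lc_conn c G X Y *m K) Z + bil G (Y *m K) (lc_conn c G X Z) = 0)].

End LieAlgebraGeometry.

(* Let V and H be the (+1)- and (-1)-eigenspaces of K and P the projection onto
   V along H.  As K is parallel, the connection preserves V and H, which are
   totally isotropic; together with the Jacobi identity this makes R(x, a) = 0
   for x, a in V.  For a in V the first Bianchi identity then turns
   Ric(Y, a) = tr (X |-> R(X, Y) a) into -tr (P R(Y, a)), and since P commutes
   with every nabla_X this is tr (P nabla_[Y,a]).  Such traces vanish: for w in H,
   nabla_w agrees with ad_w on V modulo H, and H is ad_w-stable, so tr (P nabla_w)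
   is the trace of the map induced on g/H by the nilpotent ad_w; for w in V,
   nabla_w is skew, hence traceless, and the previous case applies to -K.
   Exchanging K and -K gives Ric(Y, h) = 0 for h in H as well. *)

From HB Require Import structures.
From mathcomp Require Import all_boot all_algebra sesquilinear reals ring.
Set Implicit Arguments. Unset Strict Implicit. Unset Printing Implicit Defensive.
Import GRing.Theory Num.Theory.
Local Open Scope ring_scope.

Section NilpotentTrace.
Variable F : fieldType.

Lemma char_poly_nilpotent n (A : 'M[F]_n.+1) k : A ^+ k = 0 -> char_poly A = 'X^(n.+1).
Proof.
move=> Ak0; pose A' := map_mx (@polyC F) A.
have A'k0 : A' ^+ k = 0 by rewrite -rmorphXn /= Ak0 map_mx0.
have XA' : GRing.comm ('X%:M : 'M[{poly F}]_n.+1) A'.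
  by rewrite /GRing.comm -!mulmxE scalar_mxC.
(* X^k = (X - A) S once A^k = 0, so char_poly A divides a power of X. *)
have /(congr1 determinant) := subrXX_comm k XA'.
rewrite A'k0 subr0 -(rmorphXn (@scalar_mx _ n.+1)) -mulmxE det_mulmx det_scalar.
rewrite -exprM => charXk.
have /dvdp_exp_XsubCP[j _] : char_poly A %| ('X - 0%:P) ^+ (k * n.+1).
  by rewrite subr0 charXk dvdp_mulr.
rewrite subr0 eqp_monic ?char_poly_monic ?monicXn // => /eqP charXj.
by have := size_char_poly A; rewrite charXj size_polyXn => -[->].
Qed.

Lemma mxtrace_nilpotent n (A : 'M[F]_n) k : A ^+ k = 0 -> \tr A = 0.
Proof.
case: n A => [|n] A Ak0; first by rewrite /mxtrace big_ord0.
apply/eqP; rewrite -oppr_eq0 -char_poly_trace // (char_poly_nilpotent Ak0).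
by rewrite coefXn ltn_eqF.
Qed.

Lemma mxtrace_compress_nilpotent n (P A : 'M[F]_n) k :
  P *m P = P -> (1%:M - P) *m A *m P = 0 -> A ^+ k = 0 -> \tr (P *m A) = 0.
Proof.
move=> PP QAP0 Ak0.
have AP : A *m P = P *m A *m P.
  by apply/eqP; rewrite -subr_eq0 -QAP0 !mulmxBl mul1mx eqxx.
have PAPX j : (P *m A *m P) ^+ j.+1 = P *m A ^+ j.+1 *m P.
  elim: j => [|j IHj]; first by rewrite !expr1.
  rewrite exprSr IHj [A ^+ j.+2]exprSr -!mulmxE -!mulmxA.
  by rewrite [P *m (P *m _)]mulmxA PP [P *m (A *m P)]mulmxA -AP.
rewrite -PP -mulmxA mxtrace_mulC (mxtrace_nilpotent (k := k.+1)) //.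
by rewrite PAPX exprS Ak0 -mulmxE !(mulmx0, mul0mx).
Qed.

End NilpotentTrace.

Lemma opp_fixed_eq0 (R : numDomainType) (x : R) : x = - x -> x = 0.
Proof. by move/eqP; rewrite -addr_eq0 -mulr2n mulrn_eq0 => /eqP. Qed.

Section EigenProjection.
Variables (F : numFieldType) (n : nat).
Implicit Types (K A : 'M[F]_n) (u : 'rV[F]_n).

Definition eigenproj K : 'M[F]_n := 2^-1 *: (1%:M + K).

Lemma eigenprojN K : eigenproj (- K) = 1%:M - eigenproj K.
Proof.
have two_neq0 : (2 : F) != 0 by rewrite pnatr_eq0.
by apply/matrixP => i j; rewrite !mxE; field.
Qed.

Lemma eigenproj_add K : eigenproj K + eigenproj (- K) = 1%:M.
Proof. by rewrite eigenprojN addrC subrK. Qed.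

Lemma eigenproj_comm K A : A *m K = K *m A -> A *m eigenproj K = eigenproj K *m A.
Proof.
by move=> AK; rewrite -scalemxAl -scalemxAr mulmxDr mulmxDl mulmx1 mul1mx AK.
Qed.

Lemma eigenproj_fix K u : u *m K = u -> u *m eigenproj K = u.
Proof.
move=> uK; rewrite -scalemxAr mulmxDr mulmx1 uK -mulr2n -scaler_nat scalerA.
by rewrite mulVf ?pnatr_eq0 // scale1r.
Qed.

Lemma eigenproj_anti K u : u *m K = - u -> u *m eigenproj K = 0.
Proof. by move=> uK; rewrite -scalemxAr mulmxDr mulmx1 uK subrr scaler0. Qed.

Section Involution.
Variable K : 'M[F]_n.
Hypothesis K2 : K *m K = 1%:M.

Lemma eigenproj_mulK : eigenproj K *m K = eigenproj K.
Proof. by rewrite -scalemxAl mulmxDl mul1mx K2 addrC. Qed.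

Lemma eigenprojN_mulK : eigenproj (- K) *m K = - eigenproj (- K).
Proof.
by rewrite -scalemxAl -scalerN mulmxDl mul1mx mulNmx K2 opprD opprK addrC.
Qed.

Lemma eigenproj_idem : eigenproj K *m eigenproj K = eigenproj K.
Proof.
rewrite {2}/eigenproj -scalemxAr mulmxDr mulmx1 eigenproj_mulK -mulr2n.
by rewrite -scaler_nat scalerA mulVf ?pnatr_eq0 // scale1r.
Qed.

End Involution.
End EigenProjection.

Section LeviCivitaConnection.
Variables (R : numFieldType) (N : nat).
Local Notation vec := 'rV[R]_N.
Variables (br nab : {bilinear vec -> vec -> vec}) (b : {biscalar vec}) (G : 'M[R]_N).
Hypotheses (br_alt : forall x, br x x = 0)
  (br_jacobi : forall x y z, br x (br y z) + br y (br z x) + br z (br x y) = 0)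
  (b_gram : forall x y, b x y = (x *m G *m y^T) 0 0) (G_unit : G \in unitmx)
  (nab_metric : forall X Y Z, b (nab X Y) Z = - b Y (nab X Z))
  (nab_torsion_free : forall X Y, nab X Y - nab Y X = br X Y).

Local Notation nabla_mx X := (lin1_mx (nab X)).

Lemma lie_br_anti x y : br x y = - br y x.
Proof.
have := br_alt (x + y); rewrite linearDl !linearDr /= !br_alt add0r addr0.
by move/eqP; rewrite addr_eq0 => /eqP.
Qed.

Lemma lie_br_leibniz x y z : br x (br y z) = br (br x y) z + br y (br x z).
Proof.
have := br_jacobi x y z; rewrite (lie_br_anti z x) (lie_br_anti z) linearNr /=.
by move/eqP; rewrite -addrA addr_eq0 opprD !opprK addrC => /eqP.
Qed.

Lemma bil_nondeg u w : (forall z, b u z = b w z) -> u = w.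
Proof.
move=> buw; apply: (can_inj (mulmxK G_unit)); apply/rowP => j.
by have := buw 'e_j; rewrite !b_gram trmx_delta -!colE !mxE.
Qed.

Lemma nabla_mxD X X' : nabla_mx (X + X') = nabla_mx X + nabla_mx X'.
Proof. by apply/eqP/mulmxP => u; rewrite mulmxDr !mul_rV_lin1 /= linearDl. Qed.

Lemma mxtrace_nabla_mx X : \tr (nabla_mx X) = 0.
Proof.
have skew : nabla_mx X *m G = - (G *m (nabla_mx X)^T).
  apply/eqP/mulmxP => u; apply/rowP => j.
  rewrite !mulmxA mulmxN mxE mul_rV_lin1.
  have := nab_metric X u 'e_j; rewrite !b_gram -[nab X 'e_j]mul_rV_lin1.
  by rewrite trmx_mul !mulmxA trmx_delta -!colE !mxE.
apply: opp_fixed_eq0.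
rewrite -{1}(mulmxK G_unit (nabla_mx X)) skew mulNmx raddfN /= mxtrace_mulC.
by rewrite mulmxA mulVmx // mul1mx mxtrace_tr.
Qed.

Definition curvature X Y Z : vec :=
  nab X (nab Y Z) - nab Y (nab X Z) - nab (br X Y) Z.

(* Row-vector convention: [Z *m A *m B] applies [A] first. *)
Lemma curvature_mulmx X Y Z : curvature X Y Z
  = Z *m (nabla_mx Y *m nabla_mx X - nabla_mx X *m nabla_mx Y - nabla_mx (br X Y)).
Proof. by rewrite !mulmxBr !mulmxA !mul_rV_lin1. Qed.

Lemma curvature_is_linear X Y : linear (curvature X Y).
Proof. by move=> a u v; rewrite !curvature_mulmx mulmxDl scalemxAl. Qed.

HB.instance Definition _ X Y :=
  GRing.isLinear.Build R vec vec _ (curvature X Y) (curvature_is_linear X Y).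

Lemma curvature_skew X Y u v : b (curvature X Y u) v = - b u (curvature X Y v).
Proof. by rewrite /curvature !linearBl !linearBr /= !nab_metric; ring. Qed.

Lemma curvature_bianchi X Y Z :
  curvature X Y Z + curvature Y Z X + curvature Z X Y = 0.
Proof.
have := br_jacobi X Y Z; rewrite /curvature -!nab_torsion_free => <-.
by rewrite !(linearBl, linearBr) /=; apply/rowP => j; rewrite !mxE; ring.
Qed.

Definition ricci_map Y Z X : vec := curvature X Y Z.

Lemma ricci_map_is_linear Y Z : linear (ricci_map Y Z).
Proof.
move=> a u v; rewrite /ricci_map /curvature !linearDl !linearZl /=.
by rewrite linearDr linearZr /=; apply/rowP => j; rewrite !mxE; ring.
Qed.

HB.instance Definition _ Y Z :=
  GRing.isLinear.Build R vec vec _ (ricci_map Y Z) (ricci_map_is_linear Y Z).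

Definition ricci_curvature Y Z : R := \sum_i (curvature 'e_i Y Z) 0 i.

Lemma ricci_curvature_mxtrace Y Z :
  ricci_curvature Y Z = \tr (lin1_mx (ricci_map Y Z)).
Proof. by apply: eq_bigr => i _; rewrite [RHS]mxE. Qed.

Lemma ricci_curvatureD Y u v :
  ricci_curvature Y (u + v) = ricci_curvature Y u + ricci_curvature Y v.
Proof.
by rewrite /ricci_curvature -big_split; apply: eq_bigr => i _; rewrite linearD mxE.
Qed.

Definition parallel_paracomplex (K : 'M[R]_N) : Prop :=
  [/\ K *m K = 1%:M, forall x y, b (x *m K) (y *m K) = - b x y
    & forall X Y, nab X (Y *m K) = nab X Y *m K].

Lemma parallel_paracomplexN K :
  parallel_paracomplex K -> parallel_paracomplex (- K).
Proof.
case=> K2 KG nabK; split=> [|x y|X Y]; rewrite ?mulmxN ?mulNmx ?opprK //.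
  by rewrite linearNl linearNr /= opprK.
by rewrite linearNr /= nabK.
Qed.

Section ParallelParacomplex.
Variable K : 'M[R]_N.
Hypothesis K_par : parallel_paracomplex K.

Let K2 : K *m K = 1%:M. Proof. by case: K_par. Qed.
Let K_anti_isometry x y : b (x *m K) (y *m K) = - b x y. Proof. by case: K_par. Qed.
Let nab_K X Y : nab X (Y *m K) = nab X Y *m K. Proof. by case: K_par. Qed.

Lemma bil_fixK_isotropic u v : u *m K = u -> v *m K = v -> b u v = 0.
Proof. by move=> uK vK; apply: opp_fixed_eq0; rewrite -K_anti_isometry uK vK. Qed.

Lemma bil_antiK_isotropic u v : u *m K = - u -> v *m K = - v -> b u v = 0.
Proof.
move=> uK vK; apply: opp_fixed_eq0.
by rewrite -K_anti_isometry uK vK linearNl linearNr /= opprK.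
Qed.

Lemma nab_fixK X u : u *m K = u -> nab X u *m K = nab X u.
Proof. by move=> uK; rewrite -nab_K uK. Qed.

Lemma nab_antiK X u : u *m K = - u -> nab X u *m K = - nab X u.
Proof. by move=> uK; rewrite -nab_K uK linearN. Qed.

Lemma lie_br_fixK x y : x *m K = x -> y *m K = y -> br x y *m K = br x y.
Proof. by move=> xK yK; rewrite -nab_torsion_free mulmxBl !nab_fixK. Qed.

Lemma curvature_mulmxK X Y u : curvature X Y (u *m K) = curvature X Y u *m K.
Proof. by rewrite /curvature !mulmxBl !nab_K. Qed.

Lemma nabla_mx_commK X : nabla_mx X *m K = K *m nabla_mx X.
Proof. by apply/eqP/mulmxP => u; rewrite !mulmxA !mul_rV_lin1 /= nab_K. Qed.

Lemma bil_fixK_nab x v y : x *m K = x -> v *m K = v -> b v (nab x y) = b v (br x y).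
Proof.
move=> xK vK; rewrite -(nab_torsion_free x y) linearBr /=.
by rewrite (bil_fixK_isotropic vK (nab_fixK y xK)) subr0.
Qed.

Lemma bil_fixK_nab_nab x a v h : x *m K = x -> a *m K = a -> v *m K = v ->
  b v (nab x (nab a h)) = b v (br x (br a h)).
Proof.
move=> xK aK vK; rewrite -[LHS]opprK -nab_metric bil_fixK_nab ?nab_fixK //.
by rewrite nab_metric opprK bil_fixK_nab.
Qed.

Lemma bil_fixK_curvature x a v h : x *m K = x -> a *m K = a -> v *m K = v ->
  b v (curvature x a h) = 0.
Proof.
move=> xK aK vK; rewrite /curvature !linearBr /= !bil_fixK_nab_nab //.
by rewrite bil_fixK_nab ?lie_br_fixK // (lie_br_leibniz x a h) linearDr /=; ring.
Qed.

Lemma curvature_fixK x a W : x *m K = x -> a *m K = a -> curvature x a W = 0.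
Proof.
move=> xK aK.
have flatV v : v *m K = v -> curvature x a v = 0.
  move=> vK; apply: bil_nondeg => z.
  by rewrite curvature_skew (bil_fixK_curvature z xK aK vK) oppr0 linear0l.
have inV u : u *m eigenproj K *m K = u *m eigenproj K.
  by rewrite -mulmxA eigenproj_mulK.
have inH u : u *m eigenproj (- K) *m K = - (u *m eigenproj (- K)).
  by rewrite -mulmxA eigenprojN_mulK // mulmxN.
rewrite -[W]mulmx1 -(eigenproj_add K) mulmxDr linearD /= flatV // add0r.
(* On H the curvature R(x, a) takes values in H, and these are orthogonal to V
   by skewness, hence to everything. *)
apply: bil_nondeg => z; rewrite linear0l -[z]mulmx1 -(eigenproj_add K) mulmxDr.
rewrite linearDr /= curvature_skew flatV // linear0r oppr0 add0r.
by apply: bil_antiK_isotropic; rewrite ?inH // -curvature_mulmxK inH linearN.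
Qed.

Lemma mxtrace_eigenproj_nabla_antiK w :
  (exists k, (lin1_mx (br w)) ^+ k = 0) -> w *m K = - w ->
  \tr (eigenproj K *m nabla_mx w) = 0.
Proof.
move=> [k ad_nil] wK.
(* On V, nabla_w and ad_w differ by u |-> nabla_u w, which takes values in H. *)
have LP : nabla_mx w *m eigenproj K = lin1_mx (br w) *m eigenproj K.
  apply/eqP/mulmxP => u; rewrite !mulmxA !mul_rV_lin1 /= -nab_torsion_free.
  by rewrite mulmxBl (eigenproj_anti (nab_antiK u wK)) subr0.
rewrite mxtrace_mulC LP mxtrace_mulC (mxtrace_compress_nilpotent _ _ ad_nil) //.
  exact: eigenproj_idem.
rewrite -mulmxA -LP (eigenproj_comm (nabla_mx_commK w)) mulmxA mulmxBl mul1mx.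
by rewrite eigenproj_idem // subrr mul0mx.
Qed.

End ParallelParacomplex.

Hypothesis ad_nilpotent : forall w, exists k, (lin1_mx (br w)) ^+ k = 0.

Lemma mxtrace_eigenproj_nabla K w :
  parallel_paracomplex K -> \tr (eigenproj K *m nabla_mx w) = 0.
Proof.
move=> K_par; have [K2 _ _] := K_par.
have wPK : w *m eigenproj K *m K = w *m eigenproj K by rewrite -mulmxA eigenproj_mulK.
have wQK : w *m eigenproj (- K) *m K = - (w *m eigenproj (- K)).
  by rewrite -mulmxA eigenprojN_mulK // mulmxN.
rewrite -[w]mulmx1 -(eigenproj_add K) mulmxDr nabla_mxD mulmxDr mxtraceD.
rewrite (mxtrace_eigenproj_nabla_antiK K_par (ad_nilpotent _) wQK) addr0.
have PE : eigenproj K = 1%:M - eigenproj (- K) by rewrite -(eigenproj_add K) addrK.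
rewrite {1}PE mulmxBl mul1mx raddfB /= mxtrace_nabla_mx sub0r.
rewrite (mxtrace_eigenproj_nabla_antiK (parallel_paracomplexN K_par) (ad_nilpotent _)).
  exact: oppr0.
by rewrite mulmxN wPK.
Qed.

Lemma mxtrace_eigenproj_curvature K X Y : parallel_paracomplex K ->
  \tr (eigenproj K *m (nabla_mx Y *m nabla_mx X - nabla_mx X *m nabla_mx Y
                       - nabla_mx (br X Y))) = 0.
Proof.
move=> K_par.
have PL Z : nabla_mx Z *m eigenproj K = eigenproj K *m nabla_mx Z.
  exact/eigenproj_comm/nabla_mx_commK.
rewrite !mulmxBr !raddfB /= mxtrace_eigenproj_nabla // subr0.
have -> : \tr (eigenproj K *m (nabla_mx Y *m nabla_mx X))
        = \tr (eigenproj K *m (nabla_mx X *m nabla_mx Y)).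
  by rewrite mulmxA mxtrace_mulC mulmxA PL -mulmxA.
exact: subrr.
Qed.

Lemma ricci_curvature_fixK K Y a :
  parallel_paracomplex K -> a *m K = a -> ricci_curvature Y a = 0.
Proof.
move=> K_par aK; set M := lin1_mx (ricci_map Y a).
have xPK (x : vec) : x *m eigenproj K *m K = x *m eigenproj K.
  by rewrite -mulmxA eigenproj_mulK //; case: K_par.
have MP : M *m eigenproj K = M.
  apply/eqP/mulmxP => x; rewrite mulmxA mul_rV_lin1 /= eigenproj_fix //.
  by rewrite -curvature_mulmxK // aK.
have PM : eigenproj K *m M = - (eigenproj K *m (nabla_mx a *m nabla_mx Y
                               - nabla_mx Y *m nabla_mx a - nabla_mx (br Y a))).
  apply/eqP/mulmxP => x; rewrite mulmxA mul_rV_lin1 /= mulmxN mulmxA.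
  have := curvature_bianchi (x *m eigenproj K) Y a.
  rewrite (curvature_fixK K_par Y aK (xPK x)) addr0 -curvature_mulmx.
  by move/eqP; rewrite addr_eq0 => /eqP.
rewrite ricci_curvature_mxtrace -/M -MP mxtrace_mulC PM raddfN /=.
by rewrite mxtrace_eigenproj_curvature ?oppr0.
Qed.

Lemma ricci_curvature_eq0 K Y Z : parallel_paracomplex K -> ricci_curvature Y Z = 0.
Proof.
move=> K_par; have [K2 _ _] := K_par.
rewrite -[Z]mulmx1 -(eigenproj_add K) mulmxDr ricci_curvatureD.
rewrite (ricci_curvature_fixK _ K_par); last by rewrite -mulmxA eigenproj_mulK.
rewrite (ricci_curvature_fixK _ (parallel_paracomplexN K_par)) ?addr0 //.
by rewrite mulmxN -mulmxA eigenprojN_mulK // mulmxN opprK.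
Qed.

End LeviCivitaConnection.

Section KoszulConnection.
Variables (R : realType) (N : nat) (c : 'I_N -> 'I_N -> 'rV[R]_N) (G : 'M[R]_N).
Local Notation vec := 'rV[R]_N.

Lemma lie_br_is_bilinear : bilinear_for *:%R *:%R (lie_br c).
Proof.
have linear_coef (f : 'I_N -> 'I_N -> vec -> vec -> R) :
    (forall i j a x y z, f i j (a *: x + y) z = a * f i j x z + f i j y z) ->
    forall a x y z, \sum_i \sum_j f i j (a *: x + y) z *: c i j
      = a *: (\sum_i \sum_j f i j x z *: c i j) + \sum_i \sum_j f i j y z *: c i j.
  move=> f_lin a x y z; rewrite scaler_sumr -big_split; apply: eq_bigr => i _.
  rewrite scaler_sumr -big_split; apply: eq_bigr => j _ /=.
  by rewrite f_lin scalerA scalerDl.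
split=> u a x y /=; rewrite /lie_br.
  by apply: (linear_coef (fun i j x y => x 0 i * y 0 j)) => *; rewrite !mxE; ring.
by apply: (linear_coef (fun i j x y => y 0 i * x 0 j)) => *; rewrite !mxE; ring.
Qed.

HB.instance Definition _ :=
  bilinear_isBilinear.Build R vec vec vec _ _ (lie_br c) lie_br_is_bilinear.
HB.instance Definition _ w :=
  GRing.isLinear.Build R vec vec _ (lie_br c w) (lie_br_is_bilinear.2 w).

Lemma bil_is_bilinear : bilinear_for *%R *%R (bil G).
Proof.
split=> u a x y /=; rewrite /bil.
  by rewrite !mulmxDl -!scalemxAl !mxE.
by rewrite linearD linearZ /= mulmxDr -scalemxAr !mxE.
Qed.

HB.instance Definition _ :=
  bilinear_isBilinear.Build R vec vec R _ _ (bil G) bil_is_bilinear.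

Lemma koszul_is_bilinear : bilinear_for *:%R *:%R (koszul c G).
Proof.
split=> u a x y /=; apply/rowP => j; rewrite !mxE.
  by rewrite !(linearDl, linearZl, linearDr, linearZr) /=; ring.
by rewrite !(linearDl, linearZl, linearDr, linearZr) /=; ring.
Qed.

Lemma lc_conn_is_bilinear : bilinear_for *:%R *:%R (lc_conn c G).
Proof.
split=> u a x y /=;
  rewrite /lc_conn ?(koszul_is_bilinear.1 u) ?(koszul_is_bilinear.2 u) /=;
  by rewrite mulmxDl -scalemxAl scalerDr scalerA mulrC -scalerA.
Qed.

HB.instance Definition _ :=
  bilinear_isBilinear.Build R vec vec vec _ _ (lc_conn c G) lc_conn_is_bilinear.

Hypotheses (c_lie : is_lie_algebra c) (G_sym : G^T = G) (G_unit : G \in unitmx).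
Local Notation br := (lie_br c).
Local Notation nab := (lc_conn c G).
Local Notation b := (bil G).

Lemma bil_gram x y : b x y = (x *m G *m y^T) 0 0. Proof. by []. Qed.

Lemma bilC x y : b x y = b y x.
Proof.
have tr00 (A : 'M[R]_1) : A 0 0 = A^T 0 0 by rewrite mxE.
by rewrite /bil tr00 !trmx_mul trmxK G_sym mulmxA.
Qed.

Let two_neq0 : (2 : R) != 0. Proof. by rewrite pnatr_eq0. Qed.

Lemma lc_conn_koszul X Y Z :
  2 * b (nab X Y) Z = b (br X Y) Z - b (br Y Z) X + b (br Z X) Y.
Proof.
rewrite /lc_conn (linearZl_LR b) /= mulrA divff // mul1r {1}/bil mulmxKV // mxE.
rewrite [in RHS](row_sum_delta Z) (linear_sumr b) (linear_sum (br Y)).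
rewrite (linear_sumlz b) (linear_sumlz br) (linear_sumlz b) -sumrB -big_split /=.
apply: eq_bigr => j _; rewrite !mxE (linearZr_LR br) (linearZl_LR br) /=.
by rewrite (linearZr_LR b) !(linearZl_LR b) /= /basis_vec; ring.
Qed.

Let br_anti := lie_br_anti c_lie.1.

Lemma lc_conn_metric X Y Z : b (nab X Y) Z = - b Y (nab X Z).
Proof.
apply: (mulfI two_neq0); rewrite mulrN (bilC Y) !lc_conn_koszul.
by rewrite (br_anti Y X) (br_anti Z Y) (br_anti X Z) !(linearNl b) /=; ring.
Qed.

Lemma lc_conn_torsion_free X Y : nab X Y - nab Y X = br X Y.
Proof.
apply: (bil_nondeg bil_gram G_unit) => Z; apply: (mulfI two_neq0).
rewrite (linearBl b) mulrBr !lc_conn_koszul.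
by rewrite (br_anti Y X) (br_anti X Z) (br_anti Z Y) !(linearNl b) /=; ring.
Qed.

End KoszulConnection.

Lemma nilpotent_lie_ad (R : realType) (N : nat) (c : 'I_N -> 'I_N -> 'rV[R]_N) :
  nilpotent_lie c -> forall w, exists k, (lin1_mx (lie_br c w)) ^+ k = 0.
Proof.
move=> [k c_nil] w; exists k; apply/eqP/mulmxP => y; rewrite mulmx0.
have -> : y *m lin1_mx (lie_br c w) ^+ k = foldr (lie_br c) y (nseq k w).
  elim: k {c_nil} => [|k IHk]; first by rewrite expr0 mulmx1.
  by rewrite exprSr -mulmxE mulmxA IHk mul_rV_lin1.
by rewrite c_nil ?size_nseq.
Qed.

Lemma parakahler_parallel_paracomplex (R : realType) (N n : nat)
    (c : 'I_N -> 'I_N -> 'rV[R]_N) (G V H K : 'M[R]_N) :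
  is_lie_algebra c -> parakahler n c G V H K ->
  parallel_paracomplex (lc_conn c G) (bil G) K.
Proof.
move=> c_lie [[G_sym G_unit] [_ _ _ VH] [KV KH] KG nabF]; split=> // [|X Y].
  apply/eqP/mulmxP => x; rewrite mulmx1 mulmxA.
  have /sub_addsmxP[u ->] : (x <= V + H)%MS := submx_trans (submx1 x) VH.
  rewrite !mulmxDl (KV _ (submxMl _ _)) (KH _ (submxMl _ _)).
  by rewrite mulNmx (KV _ (submxMl _ _)) (KH _ (submxMl _ _)) opprK.
apply: (bil_nondeg (bil_gram G) G_unit) => W.
by rewrite /= lc_conn_metric //; apply/esym/eqP; rewrite -subr_eq0 opprK nabF.
Qed.

Theorem corollary8p2 (R : realType) (n : nat)
    (c : 'I_(n + n) -> 'I_(n + n) -> 'rV[R]_(n + n))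
    (G V H K : 'M[R]_(n + n)) :
  is_lie_algebra c -> nilpotent_lie c -> parakahler n c G V H K ->
  forall Y Z : 'rV[R]_(n + n), ricci c G Y Z = 0.
Proof.
move=> c_lie c_nil pK Y Z; have [[G_sym G_unit] _ _ _ _] := pK.
exact: (ricci_curvature_eq0 c_lie.1 c_lie.2 (bil_gram G) G_unit
  (lc_conn_metric c_lie G_sym G_unit) (lc_conn_torsion_free c_lie G_unit)
  (nilpotent_lie_ad c_nil) Y Z (parakahler_parallel_paracomplex c_lie pK)).
Qed.
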